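(* Let $\mathrm{IC}(\mathbf{a}_0,\dots,\mathbf{a}_{n-1})$ be an interval circulant matrix. For any nonzero $A\in\mathrm{IC}(\mathbf{a}_0,\dots,\mathbf{a}_{n-1})$ there exists $k\in\{0,\dots,n-1\}$ such that $A^{(k)}\ne0$ and $A^{(k)}/\lambda(A^{(k)})\le A/\lambda(A)$ entrywise.
   Context: $\mathrm{Circ}(a_0,\dots,a_{n-1})$ is the matrix with $A_{i,j}=a_t$, $t\in\{0,\dots,n-1\}$, $t\equiv j-i\pmod n$. $\mathrm{IC}(\mathbf{a}_0,\dots,\mathbf{a}_{n-1})$ is the set of all $\mathrm{Circ}(a_0,\dots,a_{n-1})$ with $a_t\in\mathbf{a}_t$, where each $\mathbf{a}_t\subseteq\mathbb{R}_+$ is a nonempty interval of one of the forms $[\underline{a}_t,\overline{a}_t]$, $(\underline{a}_t,\overline{a}_t)$, $(\underline{a}_t,\overline{a}_t]$, $[\underline{a}_t,\overline{a}_t)$. For $k\in\{0,\dots,n-1\}$, $A^{(k)}=\mathrm{Circ}(\underline{a}_0,\dots,\underline{a}_{k-1},\overline{a}_k,\underline{a}_{k+1},\dots,\underline{a}_{n-1})$. $\lambda(\cdot)$ is the greatest max-algebraic eigenvalue (maximum cycle geometric mean). *)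

From Stdlib Require Import Reals.
From mathcomp Require Import all_boot.
Set Implicit Arguments. Unset Strict Implicit. Unset Printing Implicit Defensive.

Definition mat (n : nat) := 'I_n -> 'I_n -> R.

(* Circ(a_0,...,a_{n-1}) : A i j = a_t with t = (j - i) mod n, 0 <= t < n. *)
Definition Circ (n : nat) (a : nat -> R) : mat n :=
  fun i j => a ((j + n - i) %% n)%N.

Arguments Circ n a : clear implicits.

(* Interval membership: cl/cr = true means the left/right endpoint is included. *)
Definition in_interval (cl cr : bool) (lo hi x : R) : Prop :=
  (if cl then Rle lo x else Rlt lo x) /\ (if cr then Rle x hi else Rlt x hi).

(* The interval with these data is nonempty and contained in R_+ = [0, +oo). *)
Definition good_interval (cl cr : bool) (lo hi : R) : Prop :=
  Rle 0 lo /\ (if cl && cr then Rle lo hi else Rlt lo hi).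

Definition Rroot (k : nat) (x : R) : R :=
  if Rle_dec x R0 then R0 else Rpower x (Rinv (INR k)).

(* Geometric mean of the cycle (s 0, s 1, ..., s k, s 0) of length k+1. *)
Definition cycle_gmean (n k : nat) (A : mat n) (s : {ffun 'I_k.+1 -> 'I_n}) : R :=
  Rroot k.+1 (\big[Rmult/R1]_(t < k.+1) A (s t) (s (ordS t))).

(* lambda(A): maximum cycle geometric mean over all cycles of length 1..n
   (for nonnegative A; 0 is neutral for Rmax on nonnegative values). *)
Definition lambda (n : nat) (A : mat n) : R :=
  \big[Rmax/R0]_(k < n) \big[Rmax/R0]_(s : {ffun 'I_k.+1 -> 'I_n}) cycle_gmean A s.

(* A^(k) = Circ(lo_0, ..., lo_{k-1}, hi_k, lo_{k+1}, ..., lo_{n-1}). *)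
Definition Ak (n : nat) (lo hi : nat -> R) (k : 'I_n) : mat n :=
  Circ n (fun t => if (t == nat_of_ord k)%N then hi t else lo t).

Definition nonzero_mat (n : nat) (A : mat n) : Prop := exists i j, A i j <> R0.

From Stdlib Require Import Reals Lra.
From mathcomp Require Import all_boot.

Set Implicit Arguments.
Unset Strict Implicit.

(* Take k with a_k maximal. For a nonnegative circulant matrix, lambda is its
   largest coefficient: no cycle mean exceeds the largest entry, and the cycle
   i -> i + t (mod n) has all its arcs equal to a_t. Hence lambda(A) = a_k,
   while lambda(A^(k)) >= hi_k >= a_k > 0. Entrywise, the k-th coefficient of
   A^(k)/lambda(A^(k)) is at most 1 = a_k/lambda(A), and every other one is
   lo_t/lambda(A^(k)) <= a_t/a_k. *)

Open Scope R_scope.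

Lemma good_interval_bounds cl cr lo hi x :
  good_interval cl cr lo hi -> in_interval cl cr lo hi x -> 0 <= lo <= x /\ x <= hi.
Proof. by rewrite /good_interval /in_interval; case: cl; case: cr => /= -[? ?] [? ?]; lra. Qed.

Lemma Rdiv_le_compat p q d d' : 0 <= p <= q -> 0 < d <= d' -> p / d' <= q / d.
Proof.
move=> [p0 pq] [d0 dd']; apply: Rmult_le_compat => //.
- by left; apply: Rinv_0_lt_compat; lra.
- exact: Rinv_le_contravar.
Qed.

Lemma bigRmax_ge_seq (I : eqType) x0 (r : seq I) (F : I -> R) i :
  i \in r -> F i <= \big[Rmax/x0]_(j <- r) F j.
Proof.
elim: r => [//|y r IH]; rewrite in_cons big_cons.
case/orP => [/eqP <- | /IH Fi]; first exact: Rmax_l.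
by apply: Rle_trans Fi _; apply: Rmax_r.
Qed.

Lemma bigRmax_le (I : Type) x0 (r : seq I) (F : I -> R) c :
  x0 <= c -> (forall i, F i <= c) -> \big[Rmax/x0]_(i <- r) F i <= c.
Proof. by move=> x0c Fc; apply: (big_ind (fun x => x <= c)) => // *; apply: Rmax_lub. Qed.

Lemma bigRmax_ge {T : finType} {x0 : R} {F : T -> R} {c : R} (t : T) :
  c <= F t -> c <= \big[Rmax/x0]_(i : T) F i.
Proof. by move/Rle_trans; apply; apply/bigRmax_ge_seq/mem_index_enum. Qed.

Lemma exists_argmax (T : finType) (t0 : T) (F : T -> R) :
  exists k, forall t, F t <= F k.
Proof.
have [k Mk] : exists k, \big[Rmax/F t0]_(i : T) F i = F k.
  apply: (big_ind (fun x => exists k, x = F k)) => [|x y [i ->] [j ->]|i _].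
  - by exists t0.
  - by apply: (Rmax_case _ _ (fun x => exists k, x = F k)); [exists i | exists j].
  - by exists i.
by exists k => t; rewrite -Mk; apply: bigRmax_ge t (Rle_refl _).
Qed.

Lemma prod_ord_bound m (F : 'I_m -> R) c :
  (forall i, 0 <= F i <= c) -> 0 <= \big[Rmult/R1]_(i < m) F i <= c ^ m.
Proof.
elim: m F => [|m IH] F HF; first by rewrite big_ord0 /=; lra.
rewrite big_ord_recl /=; have [F0 F0c] := HF ord0.
have [P0 Pc] := IH (fun i => F (lift ord0 i)) (fun i => HF _).
by split; [apply: Rmult_le_pos | apply: Rmult_le_compat].
Qed.

Lemma prod_ord_const m x : \big[Rmult/R1]_(i < m) x = x ^ m.
Proof. by rewrite big_const_ord; elim: m => //= m ->. Qed.

Lemma Rroot_nonpos k x : x <= 0 -> Rroot k x = 0.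
Proof. by rewrite /Rroot; case: Rle_dec. Qed.

Lemma Rroot_pos k x : 0 < x -> Rroot k x = Rpower x (/ INR k).
Proof. by rewrite /Rroot; case: Rle_dec => //= x0 xp; lra. Qed.

Lemma Rroot_pow N x : 0 <= x -> Rroot N.+1 (x ^ N.+1) = x.
Proof.
case/Rle_lt_or_eq_dec => [xp | <-]; last first.
  by rewrite Rroot_nonpos // pow_i; [apply: Rle_refl | apply/ltP].
rewrite Rroot_pos; last exact: pow_lt.
by rewrite -(Rpower_pow N.+1 _ xp) Rpower_mult Rinv_r ?Rpower_1 //; apply: not_0_INR.
Qed.

Lemma Rroot_le_pow N p c : 0 <= c -> 0 <= p <= c ^ N.+1 -> Rroot N.+1 p <= c.
Proof.
move=> c0 [/Rle_lt_or_eq_dec [pp | <-] pc]; last by rewrite Rroot_nonpos //; lra.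
rewrite -[X in _ <= X](@Rroot_pow N c c0) !Rroot_pos //; last lra.
by apply: Rle_Rpower_l => //; left; apply/Rinv_0_lt_compat/lt_0_INR/ltP.
Qed.

Lemma lambda_le n (M : mat n) c :
  0 <= c -> (forall i j, 0 <= M i j <= c) -> lambda M <= c.
Proof.
move=> c0 Mc; apply: bigRmax_le => // k; apply: bigRmax_le => // s.
by apply/Rroot_le_pow/prod_ord_bound.
Qed.

Lemma Circ_index_lt n (i j : 'I_n) : ((j + n - i) %% n < n)%N.
Proof. by rewrite ltn_pmod // (leq_ltn_trans _ (ltn_ord i)). Qed.

Lemma Circ_coef n (b : nat -> R) (i j : 'I_n) :
  exists2 t, (t < n)%N & Circ n b i j = b t.
Proof. by exists ((j + n - i) %% n)%N; first exact: Circ_index_lt. Qed.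

Lemma Circ_entrywise n (P : R -> R -> Prop) (b c : nat -> R) :
  (forall t, (t < n)%N -> P (b t) (c t)) ->
  forall i j : 'I_n, P (Circ n b i j) (Circ n c i j).
Proof. by move=> Pbc i j; apply/Pbc/Circ_index_lt. Qed.

Lemma modn_cycle_step n t m : (0 < n)%N -> (t < n)%N ->
  (((m.+1 %% n) * t %% n + n - m * t %% n) %% n)%N = t.
Proof.
move=> n0 tn; have Yn : (m * t %% n < n)%N by rewrite ltn_pmod.
rewrite -[RHS](modn_small tn); apply/eqP.
rewrite -(eqn_modDr (m * t %% n)) subnK; last exact: leq_trans (ltnW Yn) (leq_addl _ _).
by rewrite modnDr modn_mod modnMml modnDmr mulSn.
Qed.

Lemma lambda_Circ_ge n (b : nat -> R) t : (t < n)%N ->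
  (forall u, (u < n)%N -> 0 <= b u) -> b t <= lambda (Circ n b).
Proof.
case: n => [//|n] tn b0.
pose s : {ffun 'I_n.+1 -> 'I_n.+1} := [ffun m : 'I_n.+1 => inord (m * t %% n.+1)].
rewrite /lambda; apply: (@bigRmax_ge _ _ _ _ ord_max); apply: (@bigRmax_ge _ _ _ _ s).
rewrite /cycle_gmean (eq_bigr (fun _ => b t)); last first.
  by move=> m _; rewrite /Circ !ffunE !inordK ?ltn_pmod ?modn_cycle_step.
by rewrite prod_ord_const Rroot_pow; [apply: Rle_refl | apply: b0].
Qed.

Lemma lambda_Circ_max n (b : nat -> R) k : (k < n)%N ->
  (forall u, (u < n)%N -> 0 <= b u <= b k) -> lambda (Circ n b) = b k.
Proof.
move=> kn bk; apply: Rle_antisym; last by apply: lambda_Circ_ge => // u /bk [].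
apply: lambda_le; first by have [] := bk k kn.
by move=> i j; have [t /bk] := Circ_coef b i j; move=> ? ->.
Qed.

Theorem lemma4 (n : nat) (lo hi : nat -> R) (cl cr : nat -> bool)
  (Hint : forall t : 'I_n, good_interval (cl t) (cr t) (lo t) (hi t))
  (a : nat -> R)
  (Ha : forall t : 'I_n, in_interval (cl t) (cr t) (lo t) (hi t) (a t))
  (HA : nonzero_mat (Circ n a)) :
  exists k : 'I_n, nonzero_mat (Ak lo hi k) /\
    forall i j : 'I_n,
      Rle (Rdiv (Ak lo hi k i j) (lambda (Ak lo hi k)))
          (Rdiv (Circ n a i j) (lambda (Circ n a))).
Proof.
have [i0 [j0 Aij0]] := HA.
have bounds u (un : (u < n)%N) : 0 <= lo u <= a u /\ a u <= hi u.
  exact: good_interval_bounds (Hint (Ordinal un)) (Ha (Ordinal un)).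
have [k ak_max] := exists_argmax i0 (fun t : 'I_n => a t).
have ak_ge u (un : (u < n)%N) : 0 <= a u <= a k.
  by split; [have := bounds u un; lra | exact: (ak_max (Ordinal un))].
have lambdaA : lambda (Circ n a) = a k by apply: lambda_Circ_max.
have ak_pos : 0 < a k.
  by have [t /ak_ge tn At] := Circ_coef a i0 j0; rewrite At in Aij0; lra.
have hk_le_lambda : hi k <= lambda (Ak lo hi k).
  have := @lambda_Circ_ge n (fun t => if t == nat_of_ord k then hi t else lo t) k.
  rewrite eqxx; apply => // u /bounds; case: eqP => _; lra.
have ak_le_hk : a k <= hi k by have [] := bounds k (ltn_ord k).
have n0 : (0 < n)%N := leq_ltn_trans (leq0n i0) (ltn_ord i0).
exists k; split.
  exists (Ordinal n0), k; rewrite /Ak /Circ /= subn0 modnDr modn_small // eqxx; lra.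
move=> i j; rewrite lambdaA; set L := lambda (Ak lo hi k) in hk_le_lambda *; rewrite /Ak.
apply: (Circ_entrywise (P := fun x y => x / L <= y / a k)) => t /bounds bt.
case: eqP => [-> | _]; last by apply: Rdiv_le_compat; lra.
rewrite Rdiv_diag; last lra.
rewrite -(Rdiv_diag L); last lra.
apply: Rdiv_le_compat; lra.
Qed.
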